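(* Let $\mathbf X_1,\mathbf X_2,\dots$ be $\mathbb R^d$-valued random vectors, $d\ge2$, with common d.f. $F$ having continuous univariate margins $F^{[1]},\dots,F^{[d]}$ and (unique) copula $C$, with associated measure $\nu_C$ on $[0,1]^d$. Fix an integer $r\ge1$ and $\kappa>1$, let $\Pi=\{(j_1/(r+1),\dots,j_d/(r+1)):j_1,\dots,j_d\in\{1,\dots,r\}\}$, $\mathbf s=(1/(r+1),\dots,1/(r+1))$, and define $$\Pi_m=\Big\{\boldsymbol\pi\in\Pi:\nu_m((\boldsymbol\pi-\mathbf s,\boldsymbol\pi])>\tfrac{1}{\kappa(r+1)^d}\Big\},\qquad \Pi_C=\Big\{\boldsymbol\pi\in\Pi:\nu_C((\boldsymbol\pi-\mathbf s,\boldsymbol\pi])>\tfrac{1}{\kappa(r+1)^d}\Big\},$$ where $\nu_m$ is the empirical measure of the pseudo-observations $\hat{\mathbf U}_i=\frac{m}{m+1}(F_{1:m}^{[1]}(X_i^{[1]}),\dots,F_{1:m}^{[d]}(X_i^{[d]}))$, $i=1,\dots,m$. Assume that (i) $\nu_C((\boldsymbol\pi-\mathbf s,\boldsymbol\pi])\ne1/(\kappa(r+1)^d)$ for each $\boldsymbol\pi\in\Pi$, and (ii) $\sup_{\mathbf u\in[0,1]^d}|C_m(\mathbf u)-C(\mathbf u)|\to0$ almost surely as $m\to\infty$. Then, almost surely, $\Pi_m=\Pi_C$ for all $m$ sufficiently large.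
   Context: $F_{1:m}^{[\ell]}$ is the empirical d.f. of $X_1^{[\ell]},\dots,X_m^{[\ell]}$ (the $\ell$th coordinates). The empirical copula $C_m$ is the empirical d.f. of $\hat{\mathbf U}_1,\dots,\hat{\mathbf U}_m$. For $\mathbf a<\mathbf b$ in $[0,1]^d$, $(\mathbf a,\mathbf b]=\{\mathbf u\in[0,1]^d:\mathbf a<\mathbf u\le\mathbf b\}$ (componentwise inequalities). The copula $C$ satisfies $F(\mathbf x)=C(F^{[1]}(x^{[1]}),\dots,F^{[d]}(x^{[d]}))$. *)

From HB Require Import structures.
From mathcomp Require Import all_boot all_order all_algebra.
From mathcomp Require Import all_classical all_reals all_analysis.
Set Implicit Arguments. Unset Strict Implicit. Unset Printing Implicit Defensive.
Import Order.TTheory GRing.Theory Num.Theory.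
Local Open Scope ring_scope.
Local Open Scope classical_set_scope.

Section Defs.
Variables (R : realType) (d : nat).

Definition in_cube (u : 'I_d -> R) : Prop := forall l, 0 <= u l <= 1.

(* C-volume of the box (a,b]: the measure nu_C((a,b]) induced by the d.f. C *)
Definition cvolume (C : ('I_d -> R) -> R) (a b : 'I_d -> R) : R :=
  \sum_(e : {ffun 'I_d -> bool})
     (-1) ^+ #|[pred l | ~~ e l]| * C (fun l => if e l then b l else a l).

Definition is_copula (C : ('I_d -> R) -> R) : Prop :=
  [/\ (forall u, in_cube u -> (exists l, u l = 0) -> C u = 0),
      (forall u l, in_cube u -> (forall k, k != l -> u k = 1) -> C u = u l) &
      (forall a b, in_cube a -> in_cube b -> (forall l, a l <= b l) ->
         0 <= cvolume C a b)].

Variables (T : Type) (X : nat -> 'I_d -> T -> R).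

(* empirical d.f. F_{1:m}^{[l]} of X_1^{[l]},...,X_m^{[l]} (indices 0..m-1) *)
Definition emp_margin (w : T) (m : nat) (l : 'I_d) (t : R) : R :=
  (#|[set i : 'I_m | X i l w <= t]|)%:R / m%:R.

Definition pseudo_obs (w : T) (m : nat) (i : nat) (l : 'I_d) : R :=
  m%:R / (m.+1)%:R * emp_margin w m l (X i l w).

Definition emp_copula (w : T) (m : nat) (u : 'I_d -> R) : R :=
  (#|[set i : 'I_m | [forall l, pseudo_obs w m i l <= u l]]|)%:R / m%:R.

Definition emp_measure_box (w : T) (m : nat) (a b : 'I_d -> R) : R :=
  (#|[set i : 'I_m |
       [forall l, (a l < pseudo_obs w m i l) && (pseudo_obs w m i l <= b l)]]|)%:R
  / m%:R.

End Defs.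

Definition grid (R : realType) (d r : nat) : set ('I_d -> R) :=
  [set p | exists j : 'I_d -> nat,
     (forall l, (1 <= j l <= r)%N) /\ p = (fun l => (j l)%:R / (r.+1)%:R)].

Definition shift_down (R : realType) (d r : nat) (p : 'I_d -> R) : 'I_d -> R :=
  fun l => p l - 1 / (r.+1)%:R.

Definition threshold (R : realType) (d r : nat) (kappa : R) : R :=
  1 / (kappa * (r.+1)%:R ^+ d).

Definition Pi_m (R : realType) (d r : nat) (kappa : R) (T : Type)
  (X : nat -> 'I_d -> T -> R) (w : T) (m : nat) : set ('I_d -> R) :=
  [set p | @grid R d r p /\
     @threshold R d r kappa < emp_measure_box X w m (@shift_down R d r p) p].

Definition Pi_C (R : realType) (d r : nat) (kappa : R)
  (C : ('I_d -> R) -> R) : set ('I_d -> R) :=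
  [set p | @grid R d r p /\ @threshold R d r kappa < cvolume C (@shift_down R d r p) p].

From HB Require Import structures.
From mathcomp Require Import all_boot all_order all_algebra.
From mathcomp Require Import all_classical all_reals all_analysis.
Set Implicit Arguments. Unset Strict Implicit. Unset Printing Implicit Defensive.
Import numFieldNormedType.Exports.
Import Order.TTheory GRing.Theory Num.Theory.
Local Open Scope ring_scope.
Local Open Scope classical_set_scope.

(* The argument is pathwise. On the event of (ii), C_m converges to C at each of
   the finitely many corners of the grid boxes (pi - s, pi]. By
   inclusion-exclusion, nu_m of such a box is its C_m-volume, a fixed signed
   sum of corner values, so it converges to nu_C of the box. By (i) that limit
   is not the threshold, so eventually both lie on the same side of it, and a
   common index serves the finitely many grid points. *)

Section BoxVolume.
Variables (R : realType) (d : nat).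
Implicit Types (a b x : 'I_d -> R) (e : {ffun 'I_d -> bool}).

Definition box_corner a b e : 'I_d -> R := fun l => if e l then b l else a l.

Lemma cvolumeE (C : ('I_d -> R) -> R) a b :
  cvolume C a b =
  \sum_(e : {ffun 'I_d -> bool}) (-1) ^+ #|[pred l | ~~ e l]| * C (box_corner a b e).
Proof. by []. Qed.

Lemma in_cube_box_corner a b e : in_cube a -> in_cube b -> in_cube (box_corner a b e).
Proof. by move=> ha hb l; rewrite /box_corner; case: (e l). Qed.

Lemma natr_card_set m (Q : pred 'I_m) :
  (#|[set i | Q i]|)%:R = \sum_i (Q i)%:R :> R.
Proof.
rewrite -sum1_card natr_sum big_mkcond /=.
apply: eq_bigr => i _; have [Qi | nQi] := boolP (Q i).
  by rewrite mem_set.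
by rewrite memNset //; apply/negP.
Qed.

Lemma natr_forall (Q : pred 'I_d) : ([forall l, Q l])%:R = \prod_l (Q l)%:R :> R.
Proof.
have [/forallP allQ | /forallPn [l nQl]] := boolP [forall l, Q l].
  by rewrite big1 // => l _; rewrite allQ.
by rewrite (bigD1 l) //= (negbTE nQl) mul0r.
Qed.

(* Expand the product over l of 1[x l <= b l] - 1[x l <= a l] by distributivity. *)
Lemma box_indicatorE a b x : (forall l, a l <= b l) ->
  ([forall l, a l < x l <= b l])%:R =
  \sum_(e : {ffun 'I_d -> bool})
    (-1) ^+ #|[pred l | ~~ e l]| * ([forall l, x l <= box_corner a b e l])%:R :> R.
Proof.
move=> le_ab; rewrite natr_forall.
transitivity (\prod_l \sum_(c : bool)
    (if c then (x l <= b l)%R%:R else - (x l <= a l)%R%:R : R)).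
  apply: eq_bigr => l _; rewrite big_bool /=.
  have [lt_ax | le_xa] := ltrP (a l) (x l); first by rewrite subr0.
  by rewrite (le_trans le_xa (le_ab l)) subrr.
rewrite bigA_distr_bigA /=; apply: eq_bigr => e _.
rewrite natr_forall -prodr_const (big_mkcond (fun l => ~~ e l)) -big_split /=.
by apply: eq_bigr => l _; rewrite /box_corner; case: (e l); rewrite ?mul1r ?mulN1r.
Qed.

Lemma cvg_cvolume {T : Type} (F : set_system T) {FF : Filter F}
    (Ct : T -> ('I_d -> R) -> R) (C : ('I_d -> R) -> R) a b :
  (forall e, Ct t (box_corner a b e) @[t --> F] --> C (box_corner a b e)) ->
  cvolume (Ct t) a b @[t --> F] --> cvolume C a b.
Proof.
move=> cvgC; rewrite cvolumeE; under eq_cvg do rewrite cvolumeE.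
apply: cvg_big => [|e _]; first exact: add_continuous.
exact: cvgM (cvg_cst _) (cvgC e).
Qed.

End BoxVolume.

Lemma emp_measure_boxE (R : realType) (d : nat) (T : Type)
    (X : nat -> 'I_d -> T -> R) w m (a b : 'I_d -> R) : (forall l, a l <= b l) ->
  emp_measure_box X w m a b = cvolume (emp_copula X w m) a b.
Proof.
move=> le_ab; rewrite /emp_measure_box cvolumeE /emp_copula natr_card_set.
under eq_bigr do rewrite (box_indicatorE _ le_ab).
rewrite exchange_big mulr_suml; apply: eq_bigr => e _.
by rewrite natr_card_set -mulr_sumr mulrA.
Qed.

Lemma cvg_uniform_on {R : realType} {U : Type} (A : set U) (f : nat -> U -> R) g :
  (forall e : R, 0 < e -> exists M, forall m, (M <= m)%N ->
     forall u, A u -> `|f m u - g u| < e) ->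
  forall u, A u -> f m u @[m --> \oo] --> g u.
Proof.
move=> unif u Au; apply/cvgrPdist_lt => e e_gt0.
have [M fM] := unif e e_gt0; exists M => // m /= le_Mm.
by rewrite distrC; apply: fM.
Qed.

Lemma cvg_ltr_eventually {R : realType} {T : Type} (F : set_system T)
    {FF : Filter F} (f : T -> R) y t :
  f @ F --> y -> y != t -> \forall x \near F, (t < f x) = (t < y).
Proof.
move=> fy; rewrite neq_lt => /orP [lt_yt | lt_ty].
  by apply: filterS (cvgr_lt _ fy _ lt_yt) => x lt_fxt; rewrite !ltNge !ltW.
by apply: filterS (cvgr_gt _ fy _ lt_ty) => x lt_tfx; rewrite lt_tfx lt_ty.
Qed.

Section Grid.
Variables (R : realType) (d r : nat).

Definition grid_point (g : 'I_d -> 'I_r) : 'I_d -> R :=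
  fun l => (g l).+1%:R / r.+1%:R.

Lemma gridP p : @grid R d r p -> exists g : {ffun 'I_d -> 'I_r}, p = grid_point g.
Proof.
move=> [j [hj ->]].
have lt_jr l : ((j l).-1 < r)%N by case/andP: (hj l) => j1 jr; rewrite prednK // ltnS.
exists [ffun l => Ordinal (lt_jr l)]; apply: funext => l.
by rewrite /grid_point ffunE /= prednK //; case/andP: (hj l).
Qed.

Lemma grid_point_grid (g : 'I_d -> 'I_r) : @grid R d r (grid_point g).
Proof. by exists (fun l => (g l).+1); split => // l; rewrite ltn_ord. Qed.

Lemma near_grid {T : Type} (F : set_system T) {FF : Filter F}
    (Q : ('I_d -> R) -> T -> Prop) :
  (forall p, @grid R d r p -> \forall x \near F, Q p x) ->
  \forall x \near F, forall p, @grid R d r p -> Q p x.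
Proof.
move=> nearQ; have /(filter_forall FF) : forall g : {ffun 'I_d -> 'I_r},
    \forall x \near F, Q (grid_point g) x.
  by move=> g; apply: nearQ; apply: grid_point_grid.
by apply: filterS => x Qx p /gridP [g ->].
Qed.

Lemma shift_down_le p l : @shift_down R d r p l <= p l.
Proof. by rewrite /shift_down gerBl divr_ge0. Qed.

Lemma grid_in_cube p : @grid R d r p -> in_cube p /\ in_cube (@shift_down R d r p).
Proof.
move=> [j [hj ->]]; split => l; have /andP [j1 jr] := hj l;
  have r1_gt0 : (0 : R) < r.+1%:R by rewrite ltr0n.
- rewrite divr_ge0 //= ler_pdivrMr // mul1r ler_nat; exact: leqW.
- rewrite /shift_down -mulrBl divr_ge0 ?subr_ge0 ?ler1n //=.
  by rewrite ler_pdivrMr // mul1r lerBlDr ler_wpDr // ler_nat leqW.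
Qed.

End Grid.

Lemma Pi_m_eventually (R : realType) (d r : nat) (kappa : R) (T : Type)
    (X : nat -> 'I_d -> T -> R) (C : ('I_d -> R) -> R) w :
  (forall p, @grid R d r p -> cvolume C (@shift_down R d r p) p != @threshold R d r kappa) ->
  (forall e : R, 0 < e -> exists M : nat, forall m : nat,
      (M <= m)%N -> forall u, in_cube u -> `|emp_copula X w m u - C u| < e) ->
  \forall m \near \oo, @Pi_m R d r kappa T X w m = @Pi_C R d r kappa C.
Proof.
move=> off_threshold /cvg_uniform_on cvgC.
have : \forall m \near \oo, forall p, @grid R d r p ->
    (threshold d r kappa < emp_measure_box X w m (shift_down r p) p) =
    (threshold d r kappa < cvolume C (shift_down r p) p).
  apply: near_grid => p gp; have [cube_p cube_sp] := grid_in_cube gp.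
  have cvg_vol : cvolume (emp_copula X w m) (shift_down r p) p @[m --> \oo] -->
                 cvolume C (shift_down r p) p.
    by apply: cvg_cvolume => e; apply: cvgC; apply: in_cube_box_corner.
  apply: filterS (cvg_ltr_eventually cvg_vol (off_threshold p gp)) => m.
  by rewrite emp_measure_boxE //; apply: shift_down_le.
apply: filterS => m sameP; apply/seteqP; split => p [gp lt_p]; split => //.
  by rewrite -sameP.
by rewrite sameP.
Qed.

Theorem proposition3p1
  (dT : measure_display) (T : measurableType dT) (R : realType)
  (P : probability T R) (d : nat) (X : nat -> 'I_d -> T -> R)
  (F : ('I_d -> R) -> R) (Fm : 'I_d -> R -> R) (C : ('I_d -> R) -> R)
  (r : nat) (kappa : R) :
  (2 <= d)%N ->
  (forall i l, measurable_fun setT (X i l)) ->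
  (forall i x, fine (P [set w | forall l, X i l w <= x l]) = F x) ->
  (forall i l t, fine (P [set w | X i l w <= t]) = Fm l t) ->
  (forall l, continuous (Fm l : R -> R)) ->
  is_copula C ->
  (forall x, F x = C (fun l => Fm l (x l))) ->
  (1 <= r)%N -> 1 < kappa ->
  (forall p, @grid R d r p -> cvolume C (@shift_down R d r p) p != @threshold R d r kappa) ->
  {ae P, forall w, forall e : R, 0 < e -> exists M : nat, forall m : nat,
      (M <= m)%N -> forall u, in_cube u -> `|emp_copula X w m u - C u| < e} ->
  {ae P, forall w, exists M : nat, forall m : nat,
      (M <= m)%N -> @Pi_m R d r kappa T X w m = @Pi_C R d r kappa C}.
Proof.
move=> _ _ _ _ _ _ _ _ _ off_threshold unif_cvg.
apply: filterS unif_cvg => w /(Pi_m_eventually off_threshold) [M _ sameP].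
by exists M.
Qed.
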